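(* Let $X$ be a $T_1$ space. For open $U,V\subseteq X$ let $\mathrm{Homeo}^l_X(U,V)$ be the set of local homeomorphisms $U\to V$; with composition of maps and the inclusion maps $U\hookrightarrow V$ for $U\subseteq V$, this is a small category containing $X_{top}$ as a subcategory. Then $\mathrm{Homeo}^l_X$ is a pseudogroup sheaf on $X$.
   Context: $X_{top}$ denotes the set of open subsets of $X$, regarded as a category with exactly one morphism $U\to V$ iff $U\subseteq V$. Let $\mathcal C$ be a small category with $\mathrm{Ob}(\mathcal C)=X_{top}$ containing $X_{top}$ as a subcategory (identity on objects). For each open $V$, $\mathcal C(-,V)$ is a presheaf of sets on $X$ (restriction along $U'\subseteq U$ = precomposition with the inclusion morphism). For $x\in X$ let $\mathcal C_x(V)=\operatorname{colim}_{U\ni x}\mathcal C(U,V)$ (germ of $f\in\mathcal C(U,V)$ at $x$ written $f_x$); postcomposition with inclusions makes this functorial in $V$, and for $y\in X$ let $\mathcal C_x^y=\lim_{V\ni y}\mathcal C_x(V)$ (limit over open neighbourhoods of $y$), with projections $\mathcal C_x^y\to\mathcal C_x(V)$. Composition in $\mathcal C$ induces $\mathcal C_y^z\times\mathcal C_x^y\to\mathcal C_x^z$: given $\varphi\in\mathcal C_x^y,\psi\in\mathcal C_y^z$ and open $W\ni z$, choose $g\in\mathcal C(V,W)$, $y\in V$, representing the component $\psi_W$, and $f\in\mathcal C(U,V)$ representing $\varphi_V$; the $W$-component of $\psi\circ\varphi$ is $(g\circ f)_x$. This defines a category $\mathcal C^\star$ with objects the points of $X$ and $\mathcal C^\star(x,y)=\mathcal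 C_x^y$. For $X$ a $T_1$ space, a pre-pseudogroup on $X$ is such a $\mathcal C$ satisfying: (1) $\mathrm{Ob}(\mathcal C)=\mathrm{Ob}(X_{top})$; (2) for every open $V$ and $x\in X$, the map $\coprod_{y\in V}\mathcal C_x^y\to\mathcal C_x(V)$ induced by the projections is a bijection; (3) $\mathcal C^\star$ is a groupoid. A pseudogroup sheaf on $X$ is a pre-pseudogroup such that moreover (4) each presheaf $\mathcal C(-,V)$ is a sheaf. *)

From Stdlib Require Import FunctionalExtensionality PropExtensionality ProofIrrelevance.
Set Implicit Arguments.
Unset Strict Implicit.

Record topology (X : Type) : Type := Topology {
  is_open : (X -> Prop) -> Prop;
  open_full : is_open (fun _ => True);
  open_inter : forall A B, is_open A -> is_open B -> is_open (fun x => A x /\ B x);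
  open_union : forall (I : Type) (F : I -> X -> Prop),
      (forall i, is_open (F i)) -> is_open (fun x => exists i, F i x) }.

Definition T1 {X : Type} (T : topology X) : Prop :=
  forall x y : X, x <> y -> exists U, is_open T U /\ U x /\ ~ U y.

Lemma open_ext {X} (T : topology X) (A B : X -> Prop) :
  is_open T A -> (forall x, A x <-> B x) -> is_open T B.
Proof.
  intros HA HAB.
  replace B with A; [exact HA|].
  apply functional_extensionality; intro x; apply propositional_extensionality; apply HAB.
Qed.

(** Objects of X_top: the open subsets of X *)
Definition opens {X : Type} (T : topology X) : Type := { U : X -> Prop | is_open T U }.
Definition omem {X : Type} {T : topology X} (U : opens T) (x : X) : Prop := proj1_sig U x.
Definition osub {X : Type} {T : topology X} (U V : opens T) : Prop :=
  forall x, omem U x -> omem V x.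
Definition ointer {X : Type} {T : topology X} (U V : opens T) : opens T :=
  exist _ (fun x => omem U x /\ omem V x) (open_inter (proj2_sig U) (proj2_sig V)).

Lemma osub_refl {X} {T : topology X} (U : opens T) : osub U U.
Proof. intros x h; exact h. Qed.
Lemma osub_interl {X} {T : topology X} (U V : opens T) : osub (ointer U V) U.
Proof. intros x [h _]; exact h. Qed.
Lemma osub_interr {X} {T : topology X} (U V : opens T) : osub (ointer U V) V.
Proof. intros x [_ h]; exact h. Qed.

Arguments osub_refl {X T} U.
Arguments osub_interl {X T} U V.
Arguments osub_interr {X T} U V.

Record ocat {X : Type} (T : topology X) : Type := OCat {
  hom : opens T -> opens T -> Type;
  comp : forall U V W : opens T, hom V W -> hom U V -> hom U W;
  idm : forall U : opens T, hom U U;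
  incl : forall U V : opens T, osub U V -> hom U V }.
Arguments hom {X T} o U V.
Arguments comp {X T} o {U V W} g f.
Arguments idm {X T} o U.
Arguments incl {X T} o {U V} h.

(** C is a category containing X_top as a (identity-on-objects) subcategory *)
Definition is_ocat {X : Type} {T : topology X} (C : ocat T) : Prop :=
  (forall (U V W Z : opens T) (h : hom C W Z) (g : hom C V W) (f : hom C U V),
      comp C h (comp C g f) = comp C (comp C h g) f) /\
  (forall (U V : opens T) (f : hom C U V),
      comp C (idm C V) f = f /\ comp C f (idm C U) = f) /\
  (forall (U : opens T) (h : osub U U), incl C h = idm C U) /\
  (forall (U V W : opens T) (h1 : osub U V) (h2 : osub V W) (h3 : osub U W),
      comp C (incl C h2) (incl C h1) = incl C h3).

(** restriction in the presheaf C(-,V): precomposition with an inclusion *)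
Definition res {X : Type} {T : topology X} (C : ocat T) {U' U V : opens T}
  (h : osub U' U) (f : hom C U V) : hom C U' V := comp C f (incl C h).
Arguments res {X T} C {U' U V} h f.

(** * Germs: C_x(V) = colim_{U ∋ x} C(U,V), as a setoid *)
Record germrep {X : Type} {T : topology X} (C : ocat T) (x : X) (V : opens T) : Type :=
  GR { gdom : opens T; gin : omem gdom x; gmap : hom C gdom V }.
Arguments gdom {X T C x V} g.
Arguments gin {X T C x V} g.
Arguments gmap {X T C x V} g.

(** equality in the (filtered) colimit *)
Definition germ_eq {X : Type} {T : topology X} (C : ocat T) (x : X) (V : opens T)
  (a b : germrep C x V) : Prop :=
  exists (W : opens T) (hW : omem W x) (ha : osub W (gdom a)) (hb : osub W (gdom b)),
    res C ha (gmap a) = res C hb (gmap b).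

Definition gpush {X : Type} {T : topology X} (C : ocat T) (x : X) (V V' : opens T)
  (h : osub V V') (a : germrep C x V) : germrep C x V' :=
  @GR X T C x V' (gdom a) (gin a) (comp C (incl C h) (gmap a)).

(** * C_x^y = lim_{V ∋ y} C_x(V): compatible families of germs *)
Record costalk {X : Type} {T : topology X} (C : ocat T) (x y : X) : Type := CoStalk {
  cs : forall V : opens T, omem V y -> germrep C x V;
  cs_compat : forall (V V' : opens T) (hV : omem V y) (hV' : omem V' y) (h : osub V V'),
      germ_eq (gpush h (cs hV)) (cs hV') }.

(** condition (2): coprod_{y ∈ V} C_x^y -> C_x(V), (y,φ) ↦ φ_V, is bijective *)
Definition cond_bij {X : Type} {T : topology X} (C : ocat T) : Prop :=
  forall (V : opens T) (x : X),
    (forall a : germrep C x V,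
        exists (y : X) (hy : omem V y) (phi : costalk C x y), germ_eq (cs phi hy) a) /\
    (forall (y y' : X) (hy : omem V y) (hy' : omem V y')
            (phi : costalk C x y) (phi' : costalk C x y'),
        germ_eq (cs phi hy) (cs phi' hy') ->
        y = y' /\ (forall (W : opens T) (hW : omem W y) (hW' : omem W y'),
                     germ_eq (cs phi hW) (cs phi' hW'))).

(** composition in C^star: chi = psi ∘ phi.  For W ∋ z, g ∈ C(V,W) (y ∈ V)
    representing psi_W and f ∈ C(U,V) representing phi_V, chi_W = (g ∘ f)_x. *)
Definition is_comp {X : Type} {T : topology X} (C : ocat T) (x y z : X)
  (psi : costalk C y z) (phi : costalk C x y) (chi : costalk C x z) : Prop :=
  forall (W : opens T) (hW : omem W z) (g : germrep C y W),
    germ_eq g (cs psi hW) ->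
    forall f : germrep C x (gdom g),
      germ_eq f (cs phi (gin g)) ->
      germ_eq (@GR X T C x W (gdom f) (gin f) (comp C (gmap g) (gmap f))) (cs chi hW).

Definition is_cid {X : Type} {T : topology X} (C : ocat T) (x : X)
  (iota : costalk C x x) : Prop :=
  forall (V : opens T) (hV : omem V x),
    germ_eq (cs iota hV) (@GR X T C x V V hV (idm C V)).

(** condition (3): C^star is a groupoid *)
Definition cond_groupoid {X : Type} {T : topology X} (C : ocat T) : Prop :=
  forall (x y : X) (phi : costalk C x y),
    exists (psi : costalk C y x) (ix : costalk C x x) (iy : costalk C y y),
      is_cid ix /\ is_cid iy /\ is_comp psi phi ix /\ is_comp phi psi iy.

(** condition (4): each presheaf C(-,V) is a sheaf *)
Definition cond_sheaf {X : Type} {T : topology X} (C : ocat T) : Prop :=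
  forall (V U : opens T) (I : Type) (Ui : I -> opens T)
         (hsub : forall i, osub (Ui i) U)
         (hcov : forall x, omem U x -> exists i, omem (Ui i) x)
         (f : forall i, hom C (Ui i) V),
    (forall i j, res C (osub_interl (Ui i) (Ui j)) (f i)
                 = res C (osub_interr (Ui i) (Ui j)) (f j)) ->
    exists f0 : hom C U V,
      (forall i, res C (hsub i) f0 = f i) /\
      (forall g : hom C U V, (forall i, res C (hsub i) g = f i) -> g = f0).

(** Condition (1) (Ob C = Ob X_top) is built into the type [ocat]. *)
Definition pre_pseudogroup {X : Type} {T : topology X} (C : ocat T) : Prop :=
  is_ocat C /\ cond_bij C /\ cond_groupoid C.

Definition pseudogroup_sheaf {X : Type} {T : topology X} (C : ocat T) : Prop :=
  pre_pseudogroup C /\ cond_sheaf C.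

Definition pts {X : Type} {T : topology X} (U : opens T) : Type := { x : X | omem U x }.

(** f : U -> V is a local homeomorphism: every point has an open neighbourhood
    N ⊆ U such that f restricted to N is a homeomorphism onto an open subset
    (injective on N, continuous on N, and mapping open subsets of N to open sets). *)
Definition local_homeo {X : Type} {T : topology X} (U V : opens T) (f : pts U -> pts V) : Prop :=
  forall p : pts U, exists N : X -> Prop,
    is_open T N /\ N (proj1_sig p) /\ (forall x, N x -> omem U x) /\
    (forall q q' : pts U, N (proj1_sig q) -> N (proj1_sig q') -> f q = f q' -> q = q') /\
    (forall O, is_open T O ->
       is_open T (fun x => exists q : pts U, proj1_sig q = x /\ N x /\ O (proj1_sig (f q)))) /\
    (forall O, is_open T O -> (forall x, O x -> N x) ->
       is_open T (fun y => exists q : pts U, O (proj1_sig q) /\ proj1_sig (f q) = y)).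

Definition lhomeo {X : Type} {T : topology X} (U V : opens T) : Type :=
  { f : pts U -> pts V | local_homeo f }.

Lemma pts_inj {X} {T : topology X} (U : opens T) (a b : pts U) :
  proj1_sig a = proj1_sig b -> a = b.
Proof.
  destruct a as [a ha], b as [b hb]; simpl; intro e; subst b.
  f_equal; apply proof_irrelevance.
Qed.

Definition incl_fun {X} {T : topology X} (U V : opens T) (h : osub U V) (p : pts U) : pts V :=
  exist _ (proj1_sig p) (h _ (proj2_sig p)).

Lemma incl_local_homeo {X} {T : topology X} (U V : opens T) (h : osub U V) :
  local_homeo (incl_fun h).
Proof.
  intros p. exists (proj1_sig U). split; [exact (proj2_sig U)|].
  split; [exact (proj2_sig p)|]. split; [intros x hx; exact hx|].
  split; [|split].
  - intros q q' _ _ e. apply pts_inj.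
    apply (f_equal (@proj1_sig _ _)) in e. exact e.
  - intros O HO. apply (open_ext (open_inter (proj2_sig U) HO)).
    intros x; split.
    + intros [hU hO]. exists (exist _ x hU). simpl. auto.
    + intros [q [e [hU hO]]]. subst x. simpl in hO. auto.
  - intros O HO HON. apply (open_ext HO). intros y; split.
    + intros hy. exists (exist _ y (HON y hy)). simpl. auto.
    + intros [q [hq e]]. simpl in e. subst y. exact hq.
Qed.

Lemma comp_local_homeo {X} {T : topology X} (U V W : opens T)
  (g : pts V -> pts W) (f : pts U -> pts V) :
  local_homeo g -> local_homeo f -> local_homeo (fun p => g (f p)).
Proof.
  intros Hg Hf p.
  destruct (Hf p) as [N1 [oN1 [pN1 [sN1 [inj1 [cont1 open1]]]]]].
  destruct (Hg (f p)) as [N2 [oN2 [pN2 [sN2 [inj2 [cont2 open2]]]]]].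
  set (N := fun x => exists q : pts U, proj1_sig q = x /\ N1 x /\ N2 (proj1_sig (f q))).
  assert (HN : forall q : pts U, N (proj1_sig q) -> N1 (proj1_sig q) /\ N2 (proj1_sig (f q))).
  { intros q [q0 [e [h1 h2]]]. rewrite (pts_inj e) in h2. auto. }
  exists N. split; [exact (cont1 N2 oN2)|].
  split; [exists p; auto|].
  split; [intros x [q [e [h1 _]]]; exact (sN1 x h1)|].
  split; [|split].
  - intros q q' hq hq' e. apply HN in hq. apply HN in hq'.
    apply inj1; try tauto. apply inj2; tauto.
  - intros O HO.
    set (O2 := fun y => exists r : pts V, proj1_sig r = y /\ N2 y /\ O (proj1_sig (g r))).
    apply (open_ext (cont1 O2 (cont2 O HO))). intros x; split.
    + intros [q [e [h1 [r [er [h2 hO]]]]]]. exists q. split; [exact e|].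
      split; [exists q; split; [exact e|]; split; [exact h1|]; first [exact h2 | rewrite er in h2; exact h2 | rewrite <- er in h2; exact h2]|].
      rewrite (pts_inj er) in hO. exact hO.
    + intros [q [e [hN hO]]]. subst x. destruct (HN q hN) as [h1 h2].
      exists q. split; [reflexivity|]. split; [exact h1|].
      exists (f q). auto.
  - intros O HO HON.
    set (O1 := fun y => exists q : pts U, O (proj1_sig q) /\ proj1_sig (f q) = y).
    assert (oO1 : is_open T O1).
    { apply open1; [exact HO|]. intros x hx. destruct (HON x hx) as [q [e [h1 _]]]. exact h1. }
    assert (sO1 : forall y, O1 y -> N2 y).
    { intros y [q [hq e]]. subst y. assert (hN : N (proj1_sig q)) by exact (HON _ hq).
      apply HN in hN. tauto. }
    apply (open_ext (open2 O1 oO1 sO1)). intros z; split.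
    + intros [r [[q [hq e]] ez]]. exists q. split; [exact hq|].
      rewrite (pts_inj e). exact ez.
    + intros [q [hq ez]]. exists (f q). split; [|exact ez]. exists q. auto.
Qed.

Definition Homeo_l {X : Type} (T : topology X) : ocat T :=
  @OCat X T (fun U V => lhomeo U V)
    (fun U V W g f => exist _ (fun p => proj1_sig g (proj1_sig f p))
                        (comp_local_homeo (proj2_sig g) (proj2_sig f)))
    (fun U => exist _ (incl_fun (osub_refl U)) (incl_local_homeo (osub_refl U)))
    (fun U V h => exist _ (incl_fun h) (incl_local_homeo h)).

(** Morphisms of [Homeo_l T] are maps of point sets, so two of them are equal as
    soon as they agree pointwise.  This gives the category axioms at once, and the
    sheaf condition follows by gluing pointwise: being a local homeomorphism is a
    local property, as is seen on charts (open sets on which a map is injective,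
    continuous and open), which transfer between maps agreeing on their common
    domain.

    Equality of germs in [Homeo_l T] is pointwise agreement near the base point.
    In a T1 space every component of an element of [C_x^y] sends [x] to [y]
    ([costalk_val]); conversely a germ at [x] with value [y] extends, by
    corestriction to the neighbourhoods of [y], to an element of [C_x^y].  This
    gives the bijection of condition (2).  For condition (3), identities of
    [C^star] are germs of identity maps, composites are computed on composable
    representatives ([is_comp_of_germs]), and the inverse of the germ of [f] at [x]
    is the germ of the inverse of a chart of [f] around [x] ([chart_inverse]). *)

From Stdlib Require Import FunctionalExtensionality ProofIrrelevance ClassicalEpsilon Classical.

Section HomeoL.
Context {X : Type} {T : topology X}.

Definition lval {U V : opens T} (f : lhomeo U V) (p : pts U) : X := proj1_sig (proj1_sig f p).

Lemma pts_fun_congr {U V : opens T} (f : pts U -> pts V) (p q : pts U) :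
  proj1_sig p = proj1_sig q -> proj1_sig (f p) = proj1_sig (f q).
Proof. intro e. now rewrite (pts_inj e). Qed.

Lemma lhomeo_ext {U V : opens T} (f g : lhomeo U V) :
  (forall p, lval f p = lval g p) -> f = g.
Proof.
  destruct f as [f hf], g as [g hg]; unfold lval; simpl; intro H.
  assert (f = g) by (apply functional_extensionality; intro p; apply pts_inj, H).
  subst g. f_equal. apply proof_irrelevance.
Qed.

Lemma open_of_locally_open (S : X -> Prop) :
  (forall z, S z -> exists A, is_open T A /\ A z /\ forall w, A w -> S w) -> is_open T S.
Proof.
  intro H.
  apply (open_ext (open_union (I := {A : X -> Prop | is_open T A /\ forall w, A w -> S w})
                     (F := fun i => proj1_sig i) (fun i => proj1 (proj2_sig i)))).
  intro z; split.
  - intros [i hz]. exact (proj2 (proj2_sig i) z hz).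
  - intros hz. destruct (H z hz) as [A [oA [hA s]]]. now exists (exist _ A (conj oA s)).
Qed.

Definition is_chart {U V : opens T} (f : pts U -> pts V) (N : X -> Prop) : Prop :=
  is_open T N /\ (forall x, N x -> omem U x) /\
  (forall q q' : pts U, N (proj1_sig q) -> N (proj1_sig q') -> f q = f q' -> q = q') /\
  (forall O, is_open T O ->
     is_open T (fun x => exists q : pts U, proj1_sig q = x /\ N x /\ O (proj1_sig (f q)))) /\
  (forall O, is_open T O -> (forall x, O x -> N x) ->
     is_open T (fun y => exists q : pts U, O (proj1_sig q) /\ proj1_sig (f q) = y)).

Lemma local_homeo_charts {U V : opens T} (f : pts U -> pts V) :
  local_homeo f <-> forall p : pts U, exists N, N (proj1_sig p) /\ is_chart f N.
Proof.
  unfold local_homeo, is_chart.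
  split; intros H p; destruct (H p) as [N HN]; exists N; tauto.
Qed.

Lemma chart_inter {U V : opens T} (f : pts U -> pts V) (N O : X -> Prop) :
  is_chart f N -> is_open T O -> is_chart f (fun x => N x /\ O x).
Proof.
  intros [oN [sN [inj [cont opn]]]] oO.
  split; [exact (open_inter oN oO)|].
  split; [intros x [h _]; exact (sN x h)|].
  split; [intros q q' [h _] [h' _]; exact (inj q q' h h')|].
  split.
  - intros O' oO'. apply (open_ext (open_inter (cont O' oO') oO)).
    intro x; split.
    + intros [[q [e [hN hO']]] hO]. exists q. tauto.
    + intros [q [e [[hN hO] hO']]]. split; [exists q|]; tauto.
  - intros O' oO' sO'. apply opn; [exact oO'|]. intros x hx. exact (proj1 (sO' x hx)).
Qed.

Definition agree {U V U' V' : opens T} (f : pts U -> pts V) (g : pts U' -> pts V') : Prop :=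
  forall (p : pts U) (q : pts U'), proj1_sig p = proj1_sig q -> proj1_sig (f p) = proj1_sig (g q).

Lemma agree_sym {U V U' V' : opens T} (f : pts U -> pts V) (g : pts U' -> pts V') :
  agree f g -> agree g f.
Proof. intros H q p e. symmetry. apply H. now symmetry. Qed.

Lemma agree_exists {U V U' V' : opens T} (f : pts U -> pts V) (g : pts U' -> pts V')
  (P : X -> X -> Prop) :
  agree f g -> (forall a b, P a b -> omem U' a) ->
  (exists q : pts U, P (proj1_sig q) (proj1_sig (f q))) ->
  exists q : pts U', P (proj1_sig q) (proj1_sig (g q)).
Proof.
  intros H dom [q hq]. set (q' := exist _ (proj1_sig q) (dom _ _ hq) : pts U').
  exists q'. now rewrite <- (H q q' eq_refl).
Qed.

Lemma chart_transfer {U V U' V' : opens T} (f : pts U -> pts V) (g : pts U' -> pts V')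
  (N : X -> Prop) :
  agree f g -> is_chart f N -> (forall x, N x -> omem U' x) -> is_chart g N.
Proof.
  intros H [oN [sN [inj [cont opn]]]] sN'.
  assert (H' := agree_sym f g H).
  split; [exact oN|]. split; [exact sN'|]. split; [|split].
  - intros q q' hq hq' e. apply pts_inj.
    set (r := exist _ (proj1_sig q) (sN _ hq) : pts U).
    set (r' := exist _ (proj1_sig q') (sN _ hq') : pts U).
    enough (E : r = r') by exact (f_equal (@proj1_sig _ _) E).
    apply inj; [exact hq | exact hq' |]. apply pts_inj.
    rewrite (H r q eq_refl), (H r' q' eq_refl). now rewrite e.
  - intros O oO. apply (open_ext (cont O oO)). intro x; split.
    + apply (agree_exists f g (fun a b => a = x /\ N x /\ O b) H).
      intros a b [-> [hN _]]. exact (sN' _ hN).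
    + apply (agree_exists g f (fun a b => a = x /\ N x /\ O b) H').
      intros a b [-> [hN _]]. exact (sN _ hN).
  - intros O oO sO. apply (open_ext (opn O oO sO)). intro y; split.
    + apply (agree_exists f g (fun a b => O a /\ b = y) H).
      intros a b [hO _]. exact (sN' _ (sO _ hO)).
    + apply (agree_exists g f (fun a b => O a /\ b = y) H').
      intros a b [hO _]. exact (sN _ (sO _ hO)).
Qed.

(** A map on a smaller open set that agrees with a local homeomorphism is one;
    this covers restrictions and corestrictions. *)
Lemma local_homeo_restrict {U V U' V' : opens T} (f : pts U -> pts V) (g : pts U' -> pts V') :
  local_homeo f -> osub U' U -> agree f g -> local_homeo g.
Proof.
  intros Hf hs H. apply local_homeo_charts. intro p.
  destruct (proj1 (local_homeo_charts f) Hf (exist _ (proj1_sig p) (hs _ (proj2_sig p))))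
    as [N [hp cN]].
  exists (fun x => N x /\ omem U' x). split; [exact (conj hp (proj2_sig p))|].
  apply (chart_transfer f g _ H (chart_inter f N _ cN (proj2_sig U'))).
  now intros x [_ h].
Qed.

Lemma local_homeo_of_local {U V : opens T} (f : pts U -> pts V) :
  (forall p : pts U, exists (U' : opens T) (g : pts U' -> pts V),
      omem U' (proj1_sig p) /\ osub U' U /\ local_homeo g /\ agree g f) ->
  local_homeo f.
Proof.
  intro H. apply local_homeo_charts. intro p.
  destruct (H p) as [U' [g [hp [hs [Hg Hgf]]]]].
  destruct (proj1 (local_homeo_charts g) Hg (exist _ _ hp)) as [N [hN cN]].
  exists N. split; [exact hN|].
  apply (chart_transfer g f N Hgf cN). intros x hx. apply hs. exact (proj1 (proj2 cN) x hx).
Qed.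

Lemma local_homeo_preimage {U V : opens T} (f : pts U -> pts V) :
  local_homeo f -> forall O, is_open T O ->
  is_open T (fun z => exists q : pts U, proj1_sig q = z /\ O (proj1_sig (f q))).
Proof.
  intros Hf O oO. apply open_of_locally_open. intros z [q [e hO]].
  destruct (proj1 (local_homeo_charts f) Hf q) as [N [hq [_ [_ [_ [cont _]]]]]].
  exists (fun x => exists q : pts U, proj1_sig q = x /\ N x /\ O (proj1_sig (f q))).
  split; [exact (cont O oO)|]. split.
  - exists q. subst z. auto.
  - intros w [q' [e' [_ h]]]. eauto.
Qed.

Definition ofull : opens T := exist _ (fun _ => True) (open_full T).

Lemma chart_inverse_chart {U V M : opens T} (f : pts U -> pts V) (N : X -> Prop)
  (g : pts M -> pts ofull) :
  is_chart f N ->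
  (forall w, omem M w <-> exists q : pts U, N (proj1_sig q) /\ proj1_sig (f q) = w) ->
  (forall w : pts M, exists q : pts U, proj1_sig q = proj1_sig (g w) /\ N (proj1_sig q) /\
                                      proj1_sig (f q) = proj1_sig w) ->
  is_chart g (omem M).
Proof.
  intros [oN [_ [inj [cont opn]]]] HM Hg.
  assert (g_f : forall (q : pts U) (w : pts M), N (proj1_sig q) ->
                proj1_sig (f q) = proj1_sig w -> proj1_sig (g w) = proj1_sig q).
  { intros q w hq e. destruct (Hg w) as [q' [<- [hq' e']]].
    f_equal. apply inj; [exact hq' | exact hq |]. apply pts_inj. congruence. }
  split; [exact (proj2_sig M)|]. split; [auto|]. split; [|split].
  - intros w w' _ _ e. apply pts_inj.
    destruct (Hg w) as [q [eq [hq <-]]], (Hg w') as [q' [eq' [hq' <-]]].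
    apply pts_fun_congr. rewrite eq, eq'. now rewrite e.
  - intros O oO.
    apply (open_ext (opn (fun z => N z /\ O z) (open_inter oN oO) (fun z h => proj1 h))).
    intro z; split.
    + intros [q [[hN hO] <-]]. assert (hw : omem M (proj1_sig (f q))) by (apply HM; eauto).
      exists (exist _ _ hw). split; [reflexivity|]. split; [exact hw|].
      exact (eq_ind_r O hO (g_f q (exist _ _ hw) hN eq_refl)).
    + intros [w [<- [_ hO]]]. destruct (Hg w) as [q [e [hN fq]]].
      rewrite <- e in hO. exists q. auto.
  - intros O oO _. apply (open_ext (cont O oO)). intro z; split.
    + intros [q [<- [hN hO]]]. assert (hw : omem M (proj1_sig (f q))) by (apply HM; eauto).
      exists (exist _ _ hw). split; [exact hO | exact (g_f q (exist _ _ hw) hN eq_refl)].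
    + intros [w [hO <-]]. destruct (Hg w) as [q [e [hN fq]]].
      exists q. rewrite <- e, fq. auto.
Qed.

Lemma chart_inverse {U V : opens T} (f : pts U -> pts V) (N : X -> Prop) :
  is_chart f N ->
  exists (M : opens T) (g : lhomeo M ofull),
    (forall w, omem M w <-> exists q : pts U, N (proj1_sig q) /\ proj1_sig (f q) = w) /\
    (forall w : pts M, exists q : pts U, proj1_sig q = lval g w /\ N (proj1_sig q) /\
                                        proj1_sig (f q) = proj1_sig w).
Proof.
  intro cN. pose proof cN as [oN [_ [_ [_ opn]]]].
  set (M := exist _ (fun y => exists q : pts U, N (proj1_sig q) /\ proj1_sig (f q) = y)
              (opn N oN (fun z h => h)) : opens T).
  assert (HM : forall w, omem M w <-> exists q : pts U, N (proj1_sig q) /\ proj1_sig (f q) = w)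
    by reflexivity.
  pose (pre := fun w : pts M => constructive_indefinite_description _ (proj2_sig w)).
  pose (g := fun w : pts M => exist (fun _ => True) (proj1_sig (proj1_sig (pre w))) I : pts ofull).
  assert (Hg : forall w : pts M, exists q : pts U, proj1_sig q = proj1_sig (g w) /\
                 N (proj1_sig q) /\ proj1_sig (f q) = proj1_sig w)
    by (intro w; exists (proj1_sig (pre w)); split; [reflexivity | exact (proj2_sig (pre w))]).
  assert (Hgl : local_homeo g).
  { apply local_homeo_charts. intro w. exists (omem M).
    split; [exact (proj2_sig w) | exact (chart_inverse_chart f N g cN HM Hg)]. }
  exists M, (exist _ g Hgl). split; [exact HM | exact Hg].
Qed.

(** Composition, identities and inclusions in [Homeo_l T] are computed pointwise,
    so all category axioms reduce to equalities of values. *)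
Lemma Homeo_l_is_ocat : is_ocat (Homeo_l T).
Proof.
  repeat split; intros; apply lhomeo_ext; intro p; unfold lval; simpl;
    try reflexivity; now apply pts_fun_congr.
Qed.

Lemma res_inter_agree {A B V : opens T} (f : lhomeo A V) (g : lhomeo B V) :
  res (Homeo_l T) (osub_interl A B) f = res (Homeo_l T) (osub_interr A B) g ->
  agree (proj1_sig f) (proj1_sig g).
Proof.
  intros E p q e.
  pose (w := exist _ (proj1_sig p) (conj (proj2_sig p) (eq_ind_r (omem B) (proj2_sig q) e))
          : pts (ointer A B)).
  assert (Ew := f_equal (fun h : lhomeo (ointer A B) V => lval h w) E).
  unfold res, lval in Ew; simpl in Ew.
  rewrite (pts_fun_congr (proj1_sig f) p (incl_fun (osub_interl A B) w) eq_refl), Ew.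
  now apply pts_fun_congr.
Qed.

(** Condition (4): compatible local homeomorphisms on an open cover glue uniquely,
    the glued map being defined pointwise and a local homeomorphism by locality. *)
Lemma Homeo_l_sheaf : cond_sheaf (Homeo_l T).
Proof.
  intros V U I Ui hsub hcov f Hc.
  assert (compat : forall i j, agree (proj1_sig (f i)) (proj1_sig (f j)))
    by (intros i j; apply res_inter_agree, Hc).
  pose (idx := fun p : pts U => constructive_indefinite_description _ (hcov _ (proj2_sig p))).
  pose (f0 := fun p : pts U => proj1_sig (f (proj1_sig (idx p)))
                                 (exist _ (proj1_sig p) (proj2_sig (idx p)))).
  assert (Hf0 : local_homeo f0).
  { apply local_homeo_of_local. intro p.
    exists (Ui (proj1_sig (idx p))), (proj1_sig (f (proj1_sig (idx p)))).
    split; [exact (proj2_sig (idx p))|]. split; [exact (hsub _)|].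
    split; [exact (proj2_sig (f _))|].
    intros q r e. apply (compat _ _ q _). exact e. }
  exists (exist _ f0 Hf0). split.
  - intro i. apply lhomeo_ext. intro p. apply (compat _ _ _ p). reflexivity.
  - intros g Hg. apply lhomeo_ext. intro p. unfold lval at 2. simpl. unfold f0.
    rewrite <- (Hg (proj1_sig (idx p))). unfold res, lval; simpl. now apply pts_fun_congr.
Qed.

Local Notation germ := (germrep (Homeo_l T)).

Definition germ_val {x : X} {V : opens T} (a : germ x V) : X :=
  lval (gmap a) (exist _ x (gin a)).

Definition germ_agree {x : X} {V V' : opens T} (a : germ x V) (b : germ x V') : Prop :=
  exists W : X -> Prop, is_open T W /\ W x /\
    (forall z, W z -> omem (gdom a) z /\ omem (gdom b) z) /\
    forall (p : pts (gdom a)) (q : pts (gdom b)), proj1_sig p = proj1_sig q -> W (proj1_sig p) ->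
      lval (gmap a) p = lval (gmap b) q.

Lemma germ_eq_iff_agree {x : X} {V : opens T} (a b : germ x V) :
  germ_eq a b <-> germ_agree a b.
Proof.
  split.
  - intros [W [hW [ha [hb E]]]]. exists (proj1_sig W).
    split; [exact (proj2_sig W)|]. split; [exact hW|]. split; [intros z h; split; auto|].
    intros p q epq hp.
    assert (Ep := f_equal (fun h : lhomeo W V => lval h (exist _ (proj1_sig p) hp)) E).
    unfold res, lval in Ep |- *; simpl in Ep.
    rewrite (pts_fun_congr _ p (incl_fun ha (exist _ (proj1_sig p) hp)) eq_refl), Ep.
    now apply pts_fun_congr.
  - intros [W [oW [xW [dom E]]]].
    exists (exist _ W oW), xW, (fun z h => proj1 (dom z h)), (fun z h => proj2 (dom z h)).
    apply lhomeo_ext. intro p. apply E; [reflexivity | exact (proj2_sig p)].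
Qed.

Lemma germ_agree_refl {x : X} {V : opens T} (a : germ x V) : germ_agree a a.
Proof.
  exists (omem (gdom a)). split; [exact (proj2_sig (gdom a))|]. split; [exact (gin a)|].
  split; [auto|]. intros p q e _. unfold lval. now apply pts_fun_congr.
Qed.

Lemma germ_agree_sym {x : X} {V V' : opens T} (a : germ x V) (b : germ x V') :
  germ_agree a b -> germ_agree b a.
Proof.
  intros [W [oW [xW [dom E]]]]. exists W. split; [exact oW|]. split; [exact xW|].
  split; [intros z h; split; apply dom, h|].
  intros p q epq hp. symmetry. apply E; [now symmetry | now rewrite <- epq].
Qed.

Lemma germ_agree_trans {x : X} {V V' V'' : opens T}
  (a : germ x V) (b : germ x V') (c : germ x V'') :
  germ_agree a b -> germ_agree b c -> germ_agree a c.
Proof.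
  intros [W [oW [xW [dom E]]]] [W' [oW' [xW' [dom' E']]]].
  exists (fun z => W z /\ W' z). split; [exact (open_inter oW oW')|].
  split; [split; assumption|]. split; [intros z [h h']; split; [apply dom, h | apply dom', h']|].
  intros p r epr [h h'].
  set (q := exist _ (proj1_sig p) (proj2 (dom _ h)) : pts (gdom b)).
  rewrite (E p q eq_refl h). apply E'; [exact epr | exact h'].
Qed.

Lemma germ_agree_val {x : X} {V V' : opens T} (a : germ x V) (b : germ x V') :
  germ_agree a b -> germ_val a = germ_val b.
Proof. intros [W [_ [xW [_ E]]]]. apply E; [reflexivity | exact xW]. Qed.

Lemma germ_agree_push {x : X} {V V' : opens T} (h : osub V V') (a : germ x V) :
  germ_agree (gpush h a) a.
Proof.
  exists (omem (gdom a)). split; [exact (proj2_sig (gdom a))|]. split; [exact (gin a)|].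
  split; [auto|]. intros p q e _. unfold lval; simpl. now apply pts_fun_congr.
Qed.

Definition id_germ (x : X) : germ x ofull := @GR X T (Homeo_l T) x ofull ofull I (idm _ ofull).

Lemma germ_agree_id {x : X} {V : opens T} (a : germ x V) (W : X -> Prop) :
  is_open T W -> W x -> (forall z, W z -> omem (gdom a) z) ->
  (forall p : pts (gdom a), W (proj1_sig p) -> lval (gmap a) p = proj1_sig p) ->
  germ_agree a (id_germ x).
Proof.
  intros oW xW dom E. exists W. split; [exact oW|]. split; [exact xW|].
  split; [intros z h; split; [apply dom, h | exact I]|].
  intros p q epq hp. rewrite (E p hp). exact epq.
Qed.

Definition preim {U V : opens T} (f : lhomeo U V) (O : opens T) : opens T :=
  exist _ (fun z => exists q : pts U, proj1_sig q = z /\ omem O (lval f q))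
    (local_homeo_preimage (proj1_sig f) (proj2_sig f) _ (proj2_sig O)).

Lemma preim_sub {U V : opens T} (f : lhomeo U V) (O : opens T) : osub (preim f O) U.
Proof. intros z [q [<- _]]. exact (proj2_sig q). Qed.

Lemma preim_in {U V : opens T} (f : lhomeo U V) (O : opens T) (p : pts (preim f O)) :
  omem O (lval f (incl_fun (preim_sub f O) p)).
Proof.
  destruct (proj2_sig p) as [q [e h]]. unfold lval in *.
  now rewrite (pts_fun_congr (proj1_sig f) (incl_fun (preim_sub f O) p) q (eq_sym e)).
Qed.

Definition corestrict_fun {U V : opens T} (f : lhomeo U V) (O : opens T)
  (p : pts (preim f O)) : pts O :=
  exist _ (lval f (incl_fun (preim_sub f O) p)) (preim_in f O p).

Definition corestrict {U V : opens T} (f : lhomeo U V) (O : opens T) : lhomeo (preim f O) O :=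
  exist _ (corestrict_fun f O)
    (local_homeo_restrict (proj1_sig f) (corestrict_fun f O) (proj2_sig f) (preim_sub f O)
       (fun p q e => pts_fun_congr (proj1_sig f) p (incl_fun (preim_sub f O) q) e)).

Definition germ_corestrict {x : X} {V : opens T} (a : germ x V) (O : opens T)
  (h : omem O (germ_val a)) : germ x O :=
  @GR X T (Homeo_l T) x O (preim (gmap a) O) (ex_intro _ (exist _ x (gin a)) (conj eq_refl h))
    (corestrict (gmap a) O).

Lemma germ_corestrict_agree {x : X} {V : opens T} (a : germ x V) (O : opens T)
  (h : omem O (germ_val a)) : germ_agree (germ_corestrict a O h) a.
Proof.
  exists (omem (preim (gmap a) O)). split; [exact (proj2_sig (preim (gmap a) O))|].
  split; [exact (gin (germ_corestrict a O h))|].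
  split; [intros z hz; split; [exact hz | exact (preim_sub _ _ _ hz)]|].
  intros p q e _. unfold lval; simpl. now apply pts_fun_congr.
Qed.

Definition germ_compose {x y : X} {W : opens T} (g : germ y W) (f : germ x (gdom g)) : germ x W :=
  @GR X T (Homeo_l T) x W (gdom f) (gin f) (comp (Homeo_l T) (gmap g) (gmap f)).

Lemma germ_compose_agree {x y : X} {W W' : opens T}
  (g : germ y W) (f : germ x (gdom g)) (g' : germ y W') (f' : germ x (gdom g')) :
  germ_val f = y -> germ_agree g g' -> germ_agree f f' ->
  germ_agree (germ_compose g f) (germ_compose g' f').
Proof.
  intros fy [Wg [oWg [yWg [domg Eg]]]] [Wf [oWf [xWf [domf Ef]]]].
  set (P := fun w => exists q : pts (gdom f), proj1_sig q = w /\ Wg (lval (gmap f) q)).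
  assert (oP : is_open T P)
    by exact (local_homeo_preimage _ (proj2_sig (gmap f)) _ oWg).
  exists (fun w => Wf w /\ P w). split; [exact (open_inter oWf oP)|].
  split; [split; [exact xWf|]|].
  { exists (exist _ x (gin f)). split; [reflexivity | exact (eq_ind_r Wg yWg fy)]. }
  split; [intros z [h _]; exact (domf z h)|].
  intros p q e [hWf hP].
  assert (hWg : Wg (lval (gmap f) p)).
  { destruct hP as [q0 [e0 h0]]. unfold lval in *. now rewrite <- (pts_fun_congr _ q0 p e0). }
  apply (Eg (proj1_sig (gmap f) p) (proj1_sig (gmap f') q)); [|exact hWg].
  exact (Ef p q e hWf).
Qed.

(** Every germ [a] at [x] with value [y] has an inverse germ [b] at [y]: the germ of
    the inverse of a chart of [a] around [x]. *)
Lemma germ_inverse {x y : X} {V : opens T} (a : germ x V) :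
  germ_val a = y ->
  exists (b : germ y ofull) (bx : germ_val b = x) (hb : omem (gdom b) (germ_val a))
         (ha : omem (gdom a) (germ_val b)),
    germ_agree (germ_compose b (germ_corestrict a (gdom b) hb)) (id_germ x) /\
    germ_agree (germ_compose a (germ_corestrict b (gdom a) ha)) (id_germ y).
Proof.
  intro ay.
  set (px := exist _ x (gin a) : pts (gdom a)).
  destruct (proj1 (local_homeo_charts _) (proj2_sig (gmap a)) px) as [N [xN cN]].
  destruct (chart_inverse _ N cN) as [M [g [HM Hg]]].
  destruct cN as [oN [_ [inj _]]].
  assert (inv_l : forall (q r : pts (gdom a)), N (proj1_sig q) -> N (proj1_sig r) ->
                    lval (gmap a) q = lval (gmap a) r -> proj1_sig q = proj1_sig r)
    by (intros q r hq hr e; now rewrite (inj q r hq hr (pts_inj e))).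
  assert (yM : omem M y) by (apply HM; exists px; split; [exact xN | exact ay]).
  set (b := @GR X T (Homeo_l T) y ofull M yM g).
  assert (bx : germ_val b = x).
  { destruct (Hg (exist _ y yM)) as [q [e [hN fq]]].
    unfold germ_val; simpl. rewrite <- e.
    apply (inv_l q px hN xN). exact (eq_trans fq (eq_sym ay)). }
  assert (hb : omem M (germ_val a)) by (rewrite ay; exact yM).
  assert (ha : omem (gdom a) (germ_val b)) by (rewrite bx; exact (gin a)).
  exists b, bx, hb, ha. split.
  - set (P := preim (gmap a) M).
    apply (germ_agree_id _ (fun z => N z /\ omem P z) (open_inter oN (proj2_sig P))).
    + split; [exact xN | exact (gin (germ_corestrict a M hb))].
    + intros z [_ h]. exact h.
    + intros p [hN _]. change (lval g (corestrict_fun (gmap a) M p) = proj1_sig p).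
      destruct (Hg (corestrict_fun (gmap a) M p)) as [q [<- [hq fq]]].
      apply (inv_l q (incl_fun (preim_sub _ _) p) hq hN). exact fq.
  - set (P := preim (gmap b) (gdom a)).
    apply (germ_agree_id _ (omem P) (proj2_sig P) (gin (germ_corestrict b (gdom a) ha))); [auto|].
    intros p _. change (lval (gmap a) (corestrict_fun g (gdom a) p) = proj1_sig p).
    destruct (Hg (incl_fun (preim_sub g (gdom a)) p)) as [q [e [_ fq]]].
    unfold lval. rewrite (pts_fun_congr _ (corestrict_fun g (gdom a) p) q (eq_sym e)).
    exact fq.
Qed.

Lemma costalk_agree {x y : X} (phi : costalk (Homeo_l T) x y) (V V' : opens T)
  (hV : omem V y) (hV' : omem V' y) : germ_agree (cs phi hV) (cs phi hV').
Proof.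
  assert (hM : omem (ointer V V') y) by (split; assumption).
  assert (E := proj1 (germ_eq_iff_agree _ _) (cs_compat phi hM hV (osub_interl V V'))).
  assert (E' := proj1 (germ_eq_iff_agree _ _) (cs_compat phi hM hV' (osub_interr V V'))).
  apply (germ_agree_trans _ (cs phi hM)).
  - apply germ_agree_sym, (germ_agree_trans _ _ _ (germ_agree_sym _ _ (germ_agree_push _ _)) E).
  - exact (germ_agree_trans _ _ _ (germ_agree_sym _ _ (germ_agree_push _ _)) E').
Qed.

(** In a T1 space every component of an element of [C_x^y] sends [x] to [y]:
    a value [v <> y] would be excluded by the component at an open set
    containing [y] but not [v]. *)
Lemma costalk_val (HT : T1 T) {x y : X} (phi : costalk (Homeo_l T) x y)
  (V : opens T) (hV : omem V y) :
  germ_val (cs phi hV) = y.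
Proof.
  destruct (classic (germ_val (cs phi hV) = y)) as [h|h]; [exact h|].
  exfalso. destruct (HT y _ (fun e => h (eq_sym e))) as [O [oO [yO nO]]].
  set (V' := exist _ O oO : opens T).
  apply nO. rewrite (germ_agree_val _ _ (costalk_agree phi V V' hV yO)).
  exact (proj2_sig (proj1_sig (gmap (cs phi (V := V') yO)) _)).
Qed.

Definition costalk_of_germ {x y : X} {V : opens T} (a : germ x V) (e : germ_val a = y) :
  costalk (Homeo_l T) x y.
Proof.
  refine (@CoStalk X T (Homeo_l T) x y
            (fun O hO => germ_corestrict a O (eq_ind_r (omem O) hO e)) _).
  intros O O' hO hO' h. apply germ_eq_iff_agree.
  apply (germ_agree_trans _ _ _ (germ_agree_push _ _)).
  apply (germ_agree_trans _ _ _ (germ_corestrict_agree _ _ _)).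
  apply germ_agree_sym, germ_corestrict_agree.
Defined.

Lemma costalk_of_germ_agree {x y : X} {V : opens T} (a : germ x V) (e : germ_val a = y)
  (O : opens T) (hO : omem O y) : germ_agree (cs (costalk_of_germ a e) hO) a.
Proof. apply germ_corestrict_agree. Qed.

(** Condition (2): a germ in [C_x(V)] comes from the element of [C_x^y] it generates,
    [y] being its value; the value and the germs are determined by any component. *)
Lemma Homeo_l_bij (HT : T1 T) : cond_bij (Homeo_l T).
Proof.
  intros V x. split.
  - intros a. exists (germ_val a), (proj2_sig (proj1_sig (gmap a) (exist _ x (gin a)))).
    exists (costalk_of_germ a eq_refl). apply germ_eq_iff_agree, costalk_of_germ_agree.
  - intros y y' hy hy' phi phi' E. apply germ_eq_iff_agree in E.
    assert (ey : y = y').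
    { rewrite <- (costalk_val HT phi V hy), <- (costalk_val HT phi' V hy').
      exact (germ_agree_val _ _ E). }
    split; [exact ey|]. intros W hW hW'. apply germ_eq_iff_agree.
    apply (germ_agree_trans _ _ _ (costalk_agree phi W V hW hy)).
    apply (germ_agree_trans _ _ _ E). apply costalk_agree.
Qed.

Definition crep {x y : X} (phi : costalk (Homeo_l T) x y) : germ x ofull := cs phi (V := ofull) I.

Lemma is_comp_of_germs (HT : T1 T) {x y z : X}
  (phi : costalk (Homeo_l T) x y) (psi : costalk (Homeo_l T) y z) (chi : costalk (Homeo_l T) x z)
  {V0 : opens T} (g0 : germ y V0) (f0 : germ x (gdom g0)) :
  germ_agree g0 (crep psi) -> germ_agree f0 (crep phi) ->
  germ_agree (germ_compose g0 f0) (crep chi) -> is_comp psi phi chi.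
Proof.
  intros Hg0 Hf0 Hc W hW g Hg f Hf.
  apply germ_eq_iff_agree in Hg, Hf. apply germ_eq_iff_agree.
  assert (fy : germ_val f = y)
    by (rewrite (germ_agree_val _ _ Hf); apply (costalk_val HT)).
  assert (gg0 : germ_agree g g0).
  { apply (germ_agree_trans _ _ _ Hg), (germ_agree_trans _ _ _ (costalk_agree psi W ofull hW I)).
    exact (germ_agree_sym _ _ Hg0). }
  assert (ff0 : germ_agree f f0).
  { apply (germ_agree_trans _ _ _ Hf).
    apply (germ_agree_trans _ _ _ (costalk_agree phi _ ofull (gin g) I)).
    exact (germ_agree_sym _ _ Hf0). }
  apply (germ_agree_trans _ _ _ (germ_compose_agree g f g0 f0 fy gg0 ff0)).
  apply (germ_agree_trans _ _ _ Hc). apply costalk_agree.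
Qed.

Definition id_costalk (x : X) : costalk (Homeo_l T) x x := costalk_of_germ (id_germ x) eq_refl.

Lemma id_costalk_is_cid (x : X) : is_cid (id_costalk x).
Proof.
  intros V hV. apply germ_eq_iff_agree.
  apply (germ_agree_trans _ _ _ (costalk_of_germ_agree _ _ V hV)).
  apply germ_agree_sym, (germ_agree_id _ (omem V) (proj2_sig V) hV); [auto | reflexivity].
Qed.

(** Condition (3): every element of [C_x^y] has an inverse, given by the inverse germ
    of its representative. *)
Lemma Homeo_l_groupoid (HT : T1 T) : cond_groupoid (Homeo_l T).
Proof.
  intros x y phi.
  destruct (germ_inverse (crep phi) (costalk_val HT phi ofull I)) as [b [bx [hb [ha [Hl Hr]]]]].
  exists (costalk_of_germ b bx), (id_costalk x), (id_costalk y).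
  split; [apply id_costalk_is_cid|]. split; [apply id_costalk_is_cid|]. split.
  - apply (is_comp_of_germs HT phi _ _ b (germ_corestrict _ _ hb)).
    + apply germ_agree_sym, costalk_of_germ_agree.
    + apply germ_corestrict_agree.
    + apply (germ_agree_trans _ _ _ Hl), germ_agree_sym, costalk_of_germ_agree.
  - apply (is_comp_of_germs HT _ phi _ (crep phi) (germ_corestrict b _ ha)).
    + apply germ_agree_refl.
    + apply (germ_agree_trans _ _ _ (germ_corestrict_agree _ _ _)).
      apply germ_agree_sym, costalk_of_germ_agree.
    + apply (germ_agree_trans _ _ _ Hr), germ_agree_sym, costalk_of_germ_agree.
Qed.

End HomeoL.

Theorem mainTheorem2 (X : Type) (T : topology X) :
  T1 T -> pseudogroup_sheaf (Homeo_l T).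
Proof.
  intro HT. split; [split|].
  - exact Homeo_l_is_ocat.
  - split; [exact (Homeo_l_bij HT) | exact (Homeo_l_groupoid HT)].
  - exact Homeo_l_sheaf.
Qed.
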